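(* For any abstract path $\tau$, $w(\tau)=1+O(\tau)+B(\tau)-s_1(\tau)-u_2(\tau)$.
   Context: $\mathbb F=\{0,1\}$, $\mathbb N=\{0,1,2,\dots\}$. Abstract vertex types: $o$ (interior), $u$ (unstable), $s$ (stable). An abstract edge is $\varepsilon=(\mu,(o_1,u_1,s_1),(o_2,u_2,s_2))\in\mathbb F\times\mathbb N^3\times\mathbb N^3$ with: if $\mu=0$ then $s_1=u_2=0$; if $\mu=1$ then $o_1=o_2=0$ (interior if $\mu=0$, boundary if $\mu=1$). Weight: $w(\varepsilon)=1$ if $\mu=0$, $2-s_1-u_2$ if $\mu=1$. An abstract path $\tau=(T,\tau,\sigma)$: a non-empty finite directed tree $T=(V,E)$ (nodes; arrows, or breaks), $\tau:V\to$ abstract edges, $\sigma:E\to\{o,u,s\}$, such that for each node $v$ and type $X$, $X_1(v)\ge|\{e:t(e)=v,\sigma(e)=X\}|$ and $X_2(v)\ge|\{e:s(e)=v,\sigma(e)=X\}|$, with $X_i(v)$ the entries of $\tau(v)$. Ends: $X_1(\tau)=\sum_vX_1(v)-|\sigma^{-1}(X)|$, $X_2(\tau)=\sum_vX_2(v)-|\sigma^{-1}(X)|$ (so $s_1(\tau)$ is the number of incoming stable ends, $u_2(\tau)$ of outgoing unstable ends). Weight $w(\tau)=\sum_vw(\tau(v))$. $O(\tau)=|\sigma^{-1}(o)|$ and $B(\tau)$ is the number of nodes $v$ with $\mu(v)=1$. *)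

From HB Require Import structures.
From mathcomp Require Import all_boot all_order all_algebra.
Set Implicit Arguments. Unset Strict Implicit. Unset Printing Implicit Defensive.
Import GRing.Theory Num.Theory.
Local Open Scope ring_scope.

(* Abstract vertex types: o (interior), u (unstable), s (stable). *)
Inductive vtype := VO | VU | VS.

Definition vtype_eqb (x y : vtype) : bool :=
  match x, y with VO, VO | VU, VU | VS, VS => true | _, _ => false end.
Lemma vtype_eqP : Equality.axiom vtype_eqb.
Proof. by case; case; constructor. Qed.
HB.instance Definition _ := hasDecEq.Build vtype vtype_eqP.

Record aedge := AEdge {
  mu : bool;
  o1 : nat; u1 : nat; s1 : nat;
  o2 : nat; u2 : nat; s2 : nat }.

Definition valid_aedge (a : aedge) : Prop :=
  if mu a then o1 a = 0%N /\ o2 a = 0%N else s1 a = 0%N /\ u2 a = 0%N.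

Definition entry1 (a : aedge) (X : vtype) : nat :=
  match X with VO => o1 a | VU => u1 a | VS => s1 a end.
Definition entry2 (a : aedge) (X : vtype) : nat :=
  match X with VO => o2 a | VU => u2 a | VS => s2 a end.

Definition aedge_weight (a : aedge) : int :=
  if mu a then (2%:Z - (s1 a)%:Z - (u2 a)%:Z)%R else 1%:Z.

Section Trees.
Variables (V E : finType) (src tgt : E -> V).

(* Walks in the underlying undirected multigraph: a step (e, true) traverses
   arrow e forwards (src -> tgt), (e, false) backwards (tgt -> src). *)
Fixpoint walk_end (x : V) (es : seq (E * bool)) : option V :=
  match es with
  | [::] => Some x
  | (e, b) :: es' =>
      if b then (if src e == x then walk_end (tgt e) es' else None)
      else (if tgt e == x then walk_end (src e) es' else None)
  end.

Definition ug_connected : Prop :=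
  forall x y : V, exists es, walk_end x es = Some y.

Definition ug_acyclic : Prop :=
  forall (x : V) (es : seq (E * bool)),
    es != [::] -> uniq (map fst es) -> walk_end x es <> Some x.

Definition directed_tree : Prop :=
  (0 < #|V|)%N /\ ug_connected /\ ug_acyclic.
End Trees.

Definition abstract_path (V E : finType) (src tgt : E -> V)
    (lab : V -> aedge) (sig : E -> vtype) : Prop :=
  [/\ directed_tree src tgt,
      forall v, valid_aedge (lab v),
      forall v X, (#|[set e | (tgt e == v) && (sig e == X)]| <= entry1 (lab v) X)%N
    & forall v X, (#|[set e | (src e == v) && (sig e == X)]| <= entry2 (lab v) X)%N].

Definition ends1 (V E : finType) (lab : V -> aedge) (sig : E -> vtype) (X : vtype) : int :=
  ((\sum_(v : V) entry1 (lab v) X)%N%:Z - #|[set e | sig e == X]|%:Z)%R.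
Definition ends2 (V E : finType) (lab : V -> aedge) (sig : E -> vtype) (X : vtype) : int :=
  ((\sum_(v : V) entry2 (lab v) X)%N%:Z - #|[set e | sig e == X]|%:Z)%R.

Definition path_weight (V : finType) (lab : V -> aedge) : int :=
  (\sum_(v : V) aedge_weight (lab v))%R.

Definition num_O (E : finType) (sig : E -> vtype) : nat := #|[set e | sig e == VO]|.
Definition num_B (V : finType) (lab : V -> aedge) : nat := #|[set v | mu (lab v)]|.

From mathcomp Require Import all_boot all_order all_algebra.
From mathcomp Require Import zify ring.
Set Implicit Arguments. Unset Strict Implicit. Unset Printing Implicit Defensive.

(* Every node v carries weight 1 + mu(v) - s1(v) - u2(v) (the validity
   condition kills s1 and u2 on interior nodes), so the weight of a path is
   |V| + B - sum s1 - sum u2.  Each break is of exactly one type, hence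
   |E| = O + (number of u-breaks) + (number of s-breaks), and the identity
   reduces to |V| = |E| + 1, i.e. to the fact that a finite tree has one node
   more than it has arrows.  For the latter, fix a root r and let d be the
   walk distance to r.  Acyclicity forbids arrows between nodes of equal
   distance, and the map sending an arrow to its endpoint farther from r is a
   bijection from the arrows onto the non-root nodes: it is onto because a
   geodesic leaves every non-root node through such an arrow, and injective
   because two arrows with the same far endpoint close a cycle with the
   geodesics from their near endpoints. *)

Section Walks.
Variables (V E : finType) (src tgt : E -> V).
Local Notation walk_end := (walk_end src tgt).

Lemma walk_end_cat x y z s1 s2 :
  walk_end x s1 = Some y -> walk_end y s2 = Some z -> walk_end x (s1 ++ s2) = Some z.
Proof.
elim: s1 x => [|[e b] s IH] x /=; first by case=> ->.
by case: b; case: eqP => // _; apply: IH.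
Qed.

Lemma walk_end_catP x z s1 s2 : walk_end x (s1 ++ s2) = Some z ->
  exists y, walk_end x s1 = Some y /\ walk_end y s2 = Some z.
Proof.
elim: s1 x => [|[e b] s IH] x /=; first by exists x.
by case: b; case: eqP => // _; apply: IH.
Qed.

Lemma walk_end1 x y e b : walk_end x [:: (e, b)] = Some y ->
  if b then src e = x /\ tgt e = y else tgt e = x /\ src e = y.
Proof. by case: b => /=; case: eqP => // -> [->]. Qed.

Definition rev_walk (s : seq (E * bool)) := rev (map (fun p => (p.1, ~~ p.2)) s).

Lemma walk_end_rev x y s : walk_end x s = Some y -> walk_end y (rev_walk s) = Some x.
Proof.
elim: s x => [|[e b] s IH] x /=; first by case=> ->.
rewrite /rev_walk /= rev_cons -cats1.
by case: b; case: eqP => // <- h; apply: walk_end_cat (IH _ h) _ => /=; rewrite eqxx.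
Qed.

Lemma map_fst_rev_walk s : map fst (rev_walk s) = rev (map fst s).
Proof. by rewrite /rev_walk map_rev -map_comp. Qed.

Lemma walk_split_at e (s : seq (E * bool)) : e \in map fst s ->
  exists s1 b s2, s = s1 ++ (e, b) :: s2.
Proof.
elim: s => [|[e' b'] s IH] //=; rewrite inE => /orP [/eqP ->|/IH [s1 [b [s2 ->]]]].
  by exists [::], b', s.
by exists ((e', b') :: s1), b, s2.
Qed.

(* Induction on the walk: if the first arrow reappears in the trail built
   for the rest, cut out the loop between its two occurrences. *)
Lemma walk_to_trail x y s : walk_end x s = Some y -> exists t,
  [/\ walk_end x t = Some y, uniq (map fst t) & {subset map fst t <= map fst s}].
Proof.
elim: s x => [|[e b] s IH] x h; first by exists [::].
have [x' [h1 h2]] := walk_end_catP (s1 := [:: (e, b)]) h.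
have [t [wt ut sub_t]] := IH _ h2.
have [e_t|e_nt] := boolP (e \in map fst t); last first.
  exists ((e, b) :: t); split => /=; first exact: walk_end_cat h1 wt.
    by rewrite e_nt.
  by move=> f; rewrite !inE => /orP [->|/sub_t ->] //; rewrite orbT.
have [t1 [b' [t2 def_t]]] := walk_split_at e_t.
rewrite def_t in wt ut.
have [z [_ hz]] := walk_end_catP wt.
have [w [hw1 hw2]] := walk_end_catP (s1 := [:: (e, b')]) hz.
move: ut; rewrite map_cat cat_uniq /= => /and3P [_ _ /andP [e_nt2 ut2]].
have sub_t2 f : f \in map fst t2 -> f \in e :: map fst s.
  move=> hf; rewrite inE; apply/orP; right; apply: sub_t.
  by rewrite def_t map_cat mem_cat /= inE hf !orbT.
move: (walk_end1 h1) (walk_end1 hw1).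
case: b {h h1}; case: b' {hz hw1 wt def_t} => -[hx hx'] [hz' hw].
- exists ((e, true) :: t2); split => /=; first by rewrite hx eqxx hw.
    by rewrite e_nt2.
  by move=> f; rewrite inE => /orP [/eqP ->|/sub_t2 //]; rewrite inE eqxx.
- by exists t2; split => //; rewrite -hx hw.
- by exists t2; split => //; rewrite -hx hw.
- exists ((e, false) :: t2); split => /=; first by rewrite hx eqxx hw.
    by rewrite e_nt2.
  by move=> f; rewrite inE => /orP [/eqP ->|/sub_t2 //]; rewrite inE eqxx.
Qed.

End Walks.

Section RootedTree.
Variables (V E : finType) (src tgt : E -> V).
Hypothesis connV : ug_connected src tgt.
Hypothesis acycV : ug_acyclic src tgt.
Variable r : V.
Local Notation walk_end := (walk_end src tgt).

Definition reaches_root_in v n :=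
  [exists t : n.-tuple (E * bool), walk_end v t == Some r].

Lemma reaches_root v : exists n, reaches_root_in v n.
Proof.
have [es h] := connV v r; exists (size es); apply/existsP; exists (in_tuple es).
by rewrite h.
Qed.

Definition dist v := ex_minn (reaches_root v).

Lemma geodesic v : exists es, size es = dist v /\ walk_end v es = Some r.
Proof.
rewrite /dist; case: ex_minnP => n /existsP [t /eqP h] _.
by exists t; rewrite size_tuple.
Qed.

Lemma dist_min v es : walk_end v es = Some r -> dist v <= size es.
Proof.
move=> h; rewrite /dist; case: ex_minnP => n _; apply.
by apply/existsP; exists (in_tuple es); rewrite h.
Qed.

Lemma dist_step x e b y : walk_end x [:: (e, b)] = Some y -> dist x <= (dist y).+1.
Proof.
move=> h; have [es [<- he]] := geodesic y.
exact: (@dist_min x ((e, b) :: es)) (walk_end_cat h he).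
Qed.

Lemma dist_root : dist r = 0.
Proof. by apply/eqP; rewrite -leqn0; exact: (@dist_min r [::]). Qed.

Definition edge_below K :=
  [pred e | [&& dist (src e) <= K, dist (tgt e) <= K & dist (src e) != dist (tgt e)]].

Lemma geodesic_edge_below x es : walk_end x es = Some r -> size es = dist x ->
  {subset map fst es <= edge_below (dist x)}.
Proof.
elim: es x => [|[e b] s IH] x // h hs.
have [x' [h1 h2]] := walk_end_catP (s1 := [:: (e, b)]) h.
have m1 := dist_min h2; have m2 := dist_step h1; rewrite /= in hs.
have hs' : size s = dist x' by lia.
move=> f; rewrite inE => /orP [/eqP ->|hf].
  rewrite inE; have := walk_end1 h1.
  by case: b {h h1} => -[-> ->]; apply/and3P; split; lia.
have := IH _ h2 hs' _ hf; rewrite !inE => /and3P [q1 q2 q3].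
by apply/and3P; split => //; lia.
Qed.

(* The geodesics from a and from b glue into a trail through the root
   using only arrows below max(d a, d b); closing it with C gives a cycle. *)
Lemma trail_not_below a b C : walk_end b C = Some a -> C != [::] ->
  uniq (map fst C) -> ~ {subset map fst C <= predC (edge_below (maxn (dist a) (dist b)))}.
Proof.
move=> hC nC uC nbelow.
have [Wa [sa wa]] := geodesic a; have [Wb [sb wb]] := geodesic b.
have [W [wW uW subW]] := walk_to_trail (walk_end_cat wa (walk_end_rev wb)).
have belowW : {subset map fst W <= edge_below (maxn (dist a) (dist b))}.
  move=> e /subW; rewrite map_cat mem_cat map_fst_rev_walk mem_rev inE.
  case/orP => [/(geodesic_edge_below wa sa)|/(geodesic_edge_below wb sb)];
    by rewrite inE => /and3P [q1 q2 q3]; apply/and3P; split => //; lia.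
apply: (@acycV a (W ++ C)).
- by case: (W) nC => //; case: (C).
- rewrite map_cat cat_uniq uW uC andbT /=; apply/hasPn => e /nbelow /negP hn.
  by apply/negP => /belowW.
- exact: walk_end_cat wW hC.
Qed.

Lemma dist_neq_edge e : dist (src e) != dist (tgt e).
Proof.
apply/negP => /eqP heq.
apply: (@trail_not_below (tgt e) (src e) [:: (e, true)]) => //=.
- by rewrite eqxx.
- by move=> f; rewrite inE => /eqP ->; rewrite !inE heq eqxx !andbF.
Qed.

Definition rising e := dist (src e) < dist (tgt e).
Definition upper e := if rising e then tgt e else src e.
Definition lower e := if rising e then src e else tgt e.

Lemma dist_lower_upper e : dist (lower e) < dist (upper e).
Proof.
move/eqP: (dist_neq_edge e); rewrite /lower /upper /rising.
by case: (ltnP (dist (src e)) (dist (tgt e))); lia.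
Qed.

Lemma walk_lower_upper e : walk_end (lower e) [:: (e, rising e)] = Some (upper e).
Proof. by rewrite /lower /upper; case: (rising e) => /=; rewrite eqxx. Qed.

Lemma walk_upper_lower e : walk_end (upper e) [:: (e, ~~ rising e)] = Some (lower e).
Proof. by rewrite /lower /upper; case: (rising e) => /=; rewrite eqxx. Qed.

Lemma upper_not_below e K : K < dist (upper e) -> e \notin edge_below K.
Proof.
rewrite /upper /rising inE.
by case: (ltnP (dist (src e)) (dist (tgt e))) => _ h; apply/negP => /and3P [q1 q2 _]; lia.
Qed.

Definition upper_or_root (o : option E) : V := if o is Some e then upper e else r.

Lemma upper_or_root_inj : injective upper_or_root.
Proof.
have upper_neq_root e : upper e != r.
  by apply/eqP => h; have := dist_lower_upper e; rewrite h dist_root.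
case=> [e|] [e'|] //= => [hee'|h|h]; last 2 first.
- by move: (upper_neq_root e); rewrite h eqxx.
- by move: (upper_neq_root e'); rewrite h eqxx.
have [->//|ne] := eqVneq e e'; exfalso.
have := dist_lower_upper e; have := dist_lower_upper e'; rewrite hee' => d1 d2.
apply: (@trail_not_below (lower e) (lower e') [:: (e', rising e'); (e, ~~ rising e)]).
- apply: (walk_end_cat (s1 := [:: (e', rising e')]) (walk_lower_upper e')).
  by rewrite -hee'; apply: walk_upper_lower.
- done.
- by rewrite /= inE eq_sym ne.
- move=> f; rewrite !inE => /orP [] /eqP ->; apply: upper_not_below;
    by rewrite /= ?hee'; lia.
Qed.

Lemma upper_or_root_onto v : exists o, upper_or_root o = v.
Proof.
have [es [hs he]] := geodesic v.
case: es hs he => [|[e b] s] hs he; first by exists None; case: he.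
have [x [h1 h2]] := walk_end_catP (s1 := [:: (e, b)]) he.
have dx := dist_min h2; rewrite /= in hs.
exists (Some e); rewrite /= /upper /rising.
have := walk_end1 h1; case: b {he h1} => -[-> ->].
  by rewrite ifN // -leqNgt; lia.
by rewrite ifT //; lia.
Qed.

Lemma card_rooted_tree : #|V| = #|E|.+1.
Proof.
rewrite -card_option; apply/esym/bij_eq_card.
have onto v : exists o, upper_or_root o == v.
  by have [o <-] := upper_or_root_onto v; exists o.
have inverse v : upper_or_root (xchoose (onto v)) = v by apply/eqP; exact: xchooseP (onto v).
exists (fun v => xchoose (onto v)) => // o.
by apply: upper_or_root_inj; rewrite inverse.
Qed.

End RootedTree.

Lemma card_directed_tree (V E : finType) (src tgt : E -> V) :
  directed_tree src tgt -> #|V| = #|E|.+1.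
Proof. by case=> /card_gt0P [r _] [connV acycV]; apply: card_rooted_tree r. Qed.

Import GRing.Theory.
Local Open Scope ring_scope.

Lemma aedge_weightE a : valid_aedge a ->
  aedge_weight a = 1 + (mu a : nat)%:Z - (s1 a)%:Z - (u2 a)%:Z.
Proof.
rewrite /aedge_weight /valid_aedge.
by case: a => [[] o1 u1 s1 o2 u2 s2] /= [h1 h2]; rewrite ?h1 ?h2; lia.
Qed.

Lemma card_set_sum (T : finType) (P : pred T) :
  #|[set x | P x]| = (\sum_x P x)%N.
Proof. by rewrite -sum1_card big_mkcond; apply: eq_bigr => x _; rewrite inE. Qed.

Lemma card_by_vtype (E : finType) (sig : E -> vtype) :
  #|E| = (#|[set e | sig e == VO]| + #|[set e | sig e == VU]| +
          #|[set e | sig e == VS]|)%N.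
Proof.
by rewrite !card_set_sum -!big_split -sum1_card; apply: eq_bigr => e _; case: (sig e).
Qed.

Theorem corollary3p12 (V E : finType) (src tgt : E -> V)
    (lab : V -> aedge) (sig : E -> vtype) :
  abstract_path src tgt lab sig ->
  path_weight lab =
    (1 + (num_O sig)%:Z + (num_B lab)%:Z - ends1 lab sig VS - ends2 lab sig VU)%R.
Proof.
case=> treeV validV _ _.
have sumPosz (T : finType) (f : T -> nat) :
    (\sum_x f x)%N%:Z = \sum_x (f x)%:Z by apply: (big_morph Posz PoszD).
rewrite /path_weight (eq_bigr _ (fun v _ => aedge_weightE (validV v))).
rewrite !sumrB big_split sumr_const (card_directed_tree treeV) (card_by_vtype sig).
rewrite /ends1 /ends2 /num_O /num_B !card_set_sum /= natz -addn1 !PoszD !sumPosz; ring.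
Qed.
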